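(* Let $H=(V,E,C,\ell)$ be an edge-colored hypergraph of rank $r\ge 3$ with weights $w_e\ge 0$, let $x$ be any feasible solution of the \textsc{MinECC} LP relaxation with $x_e=\max_{v\in e}x_v^{\ell(e)}$ for every $e$, and let $Y$ be the output of GenColorRound applied to $x$ with interval $I=(\frac12,\frac23)$. Then for every edge $e\in E$, $\Pr[e\in\mathcal M_Y]\le 2\left(1-\frac{1}{r+1}\right)x_e$. Consequently, if $x$ is an optimal LP solution, the expected \textsc{MinECC} cost of $Y$ is at most $2\left(1-\frac{1}{r+1}\right)$ times the optimal \textsc{MinECC} value.
   Context: An edge-colored hypergraph is $H=(V,E,C,\ell)$ with node set $V$, a multiset $E$ of nonempty subsets of $V$, colors $C=[k]$, $\ell\colon E\to C$, weights $w_e\ge 0$; its rank is $r=\max_{e}|e|$. A node coloring $Y\colon V\to C$ makes a mistake at $e$ ($e\in\mathcal M_Y$) if some $v\in e$ has $Y[v]\ne\ell(e)$; \textsc{MinECC} minimizes $\sum_e w_e\mathbb 1[e\in\mathcal M_Y]$. The \textsc{MinECC} LP relaxation: minimize $\sum_e w_e x_e$ subject to $\sum_{i=1}^k x_v^i=k-1$ for all $v\in V$; $x_e\ge x_v^{\ell(e)}$ for all $e\in E$, $v\in e$; $0\le x_v^i\le1$; $0\le x_e\le 1$. GenColorRound with interval $I\subseteq[0,1]$, applied to a feasible LP solution $x$: draw $\rho$ uniformly at random from $I$ and, independently, a uniformly random permutation $\pi$ of $[k]$; let $S_i=\{v\in V: x_v^i<\rho\}$ (color $i$ wants $v$ if $x_v^i<\rho$);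 for each $v\in\bigcup_i S_i$ set $Y[v]=\pi(j)$ where $j$ is the largest index with $v\in S_{\pi(j)}$; nodes in no $S_i$ receive an arbitrary color. *)

From HB Require Import structures.
From mathcomp Require Import all_boot all_order all_algebra all_fingroup.
From mathcomp Require Import all_classical all_reals all_analysis.
Set Implicit Arguments. Unset Strict Implicit. Unset Printing Implicit Defensive.
Import Order.TTheory GRing.Theory Num.Theory.
Local Open Scope classical_set_scope.
Local Open Scope ring_scope.

(* An edge-colored hypergraph: nodes V (finite), edges indexed by a finite
   type E (so E is a multiset of node sets), colors 'I_k, edge map edge,
   edge coloring ell. *)

Definition rank (V E : finType) (edge : E -> {set V}) : nat :=
  \max_(e : E) #|edge e|.

Definition mistake (V E : finType) (k : nat) (edge : E -> {set V})
  (ell : E -> 'I_k) (Y : V -> 'I_k) (e : E) : bool :=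
  [exists v in edge e, Y v != ell e].

Definition ecc_cost (R : realType) (V E : finType) (k : nat)
  (edge : E -> {set V}) (ell : E -> 'I_k) (w : E -> R) (Y : V -> 'I_k) : R :=
  \sum_(e : E) w e * (mistake edge ell Y e)%:R.

Definition lp_feasible (R : realType) (V E : finType) (k : nat)
  (edge : E -> {set V}) (ell : E -> 'I_k)
  (xv : V -> 'I_k -> R) (xe : E -> R) : Prop :=
  (forall v, \sum_(i < k) xv v i = (k%:R - 1)) /\
  (forall e v, v \in edge e -> xv v (ell e) <= xe e) /\
  (forall v i, 0 <= xv v i <= 1) /\
  (forall e, 0 <= xe e <= 1).

Definition lp_obj (R : realType) (E : finType) (w : E -> R) (xe : E -> R) : R :=
  \sum_(e : E) w e * xe e.

Definition lp_optimal (R : realType) (V E : finType) (k : nat)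
  (edge : E -> {set V}) (ell : E -> 'I_k) (w : E -> R)
  (xv : V -> 'I_k -> R) (xe : E -> R) : Prop :=
  lp_feasible edge ell xv xe /\
  forall xv' xe', lp_feasible edge ell xv' xe' -> lp_obj w xe <= lp_obj w xe'.

(* Color i "wants" v iff xv v i < rho; v gets pi j for the largest index j
   with v in S_(pi j); nodes wanted by no color get the arbitrary color
   dflt v (which may depend on pi). *)
Definition gen_color_round (R : realType) (V : finType) (k : nat)
  (xv : V -> 'I_k -> R) (dflt : V -> 'I_k) (rho : R) (pi : {perm 'I_k})
  (v : V) : 'I_k :=
  match [pick j : 'I_k | (xv v (pi j) < rho) &&
           [forall j' : 'I_k, (xv v (pi j') < rho) ==> (j' <= j)%N]] with
  | Some j => pi j
  | None => dflt v
  end.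

(* Pr[e in M_Y] for rho uniform on I = ]a, b[ (density 1/(b-a) w.r.t.
   Lebesgue measure) and pi uniform on the k! permutations, independent. *)
Definition prob_mistake (R : realType) (V E : finType) (k : nat)
  (edge : E -> {set V}) (ell : E -> 'I_k) (xv : V -> 'I_k -> R)
  (dflt : {perm 'I_k} -> V -> 'I_k) (a b : R) (e : E) : \bar R :=
  ((k`!%:R)^-1)%:E *
  \sum_(pi : {perm 'I_k})
     (((b - a)^-1)%:E *
      (@lebesgue_measure R)
        ([set rho : R | (a < rho < b)%R] `&`
         [set rho | mistake edge ell (gen_color_round xv (dflt pi) rho pi) e]))%E.

Definition expected_cost (R : realType) (V E : finType) (k : nat)
  (edge : E -> {set V}) (ell : E -> 'I_k) (w : E -> R) (xv : V -> 'I_k -> R)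
  (dflt : {perm 'I_k} -> V -> 'I_k) (a b : R) : \bar R :=
  ((k`!%:R)^-1)%:E *
  \sum_(pi : {perm 'I_k})
     (((b - a)^-1)%:E *
      \int[@lebesgue_measure R]_(rho in [set rho : R | (a < rho < b)%R])
         (ecc_cost edge ell w (gen_color_round xv (dflt pi) rho pi))%:E)%E.

From HB Require Import structures.
From mathcomp Require Import all_boot all_order all_algebra all_fingroup.
From mathcomp Require Import all_classical all_reals all_analysis.
From mathcomp Require Import ring lra zify measurable_realfun.
Import Order.TTheory GRing.Theory Num.Theory.
Set Implicit Arguments. Unset Strict Implicit. Unset Printing Implicit Defensive.
Local Open Scope ring_scope.

(* Fix an edge e of colour c and write x := x_e.  Thresholds rho <= x are
   charged in full.  For x < rho <= 1 - x every node of e is wanted by c and,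
   its slacks 1 - x_v^i being nonnegative with sum 1, by no other colour, so e
   is coloured correctly.  For max(x, 1 - x) < rho < 2/3 a node is wanted by at
   most two colours, so at most |e| + 1 <= r + 1 colours want a node of e, and e
   is coloured correctly whenever c comes last among them in pi, which happens
   with probability at least 1/(r+1).  Integrating over rho uniform on
   (1/2, 2/3) gives at most 2 (1 - 1/(r+1)) x once r >= 3.  The cost bound then
   follows by linearity of expectation, an optimal colouring being a feasible
   point of the LP. *)

Lemma card_bigcup_le (I T : finType) (P : {pred I}) (F : I -> {set T}) :
  (#|\bigcup_(i in P) F i| <= \sum_(i in P) #|F i|)%N.
Proof.
elim/big_ind2: _ => [|m A n B Am Bn|//]; first by rewrite cards0.
by apply: leq_trans (leq_card_setU _ _) _; exact: leq_add.
Qed.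

(* Positions in [pi] are read through [pi^-1]: [gen_color_round] gives a node
   the colour [pi j] with the largest [j] among the colours wanting it. *)
Definition perm_last (k : nat) (S : {set 'I_k}) (s : 'I_k) : {set {perm 'I_k}} :=
  [set pi : {perm 'I_k} | [forall t in S, ((pi^-1)%g t <= (pi^-1)%g s)%N]].

Lemma card_perm_last_le (k : nat) (S : {set 'I_k}) (s c : 'I_k) :
  s \in S -> c \in S -> (#|perm_last S s| <= #|perm_last S c|)%N.
Proof.
move=> sS cS; rewrite -(card_imset _ (mulIg (tperm s c))).
apply: subset_leq_card; apply/fintype.subsetP => _ /imsetP[pi piP ->].
rewrite !inE in piP *; apply/forall_inP => t tS.
rewrite !invMg !permM tpermV tpermR.
by apply: (forall_inP piP); case: tpermP => // ->.
Qed.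

(* Some element of [S] is last in each permutation, and each element of [S] is
   last equally often. *)
Lemma fact_le_card_mul_perm_last (k : nat) (S : {set 'I_k}) (c : 'I_k) :
  c \in S -> (k`! <= #|S| * #|perm_last S c|)%N.
Proof.
move=> cS; have -> : k`! = (\sum_(pi : {perm 'I_k}) 1)%N by rewrite sum1_card card_Sn.
apply: (@leq_trans (\sum_(s in S) #|perm_last S s|)); last first.
  by rewrite -sum_nat_const; apply: leq_sum => s sS; exact: card_perm_last_le.
under [X in (_ <= X)%N]eq_bigr do rewrite -sum1_card big_mkcond /=.
rewrite exchange_big /=; apply: leq_sum => pi _.
have S0 : (0 < #|S|)%N by apply/card_gt0P; exists c.
have [s sS smax] := @eq_bigmax_cond _ (mem S) (fun t => nat_of_ord ((pi^-1)%g t)) S0.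
rewrite (bigD1 s) //= inE.
suff -> : [forall t in S, ((pi^-1)%g t <= (pi^-1)%g s)%N] by [].
by apply/forall_inP => t tS; rewrite -smax; exact: leq_bigmax_cond.
Qed.

(* [gen_color_round] sees [xv] and [rho] only through the relation
   "colour i wants node v". *)
Definition round_by (V : finType) (k : nat) (W : V -> 'I_k -> bool)
    (d : V -> 'I_k) (pi : {perm 'I_k}) (v : V) : 'I_k :=
  match [pick j : 'I_k | W v (pi j) &&
           [forall j' : 'I_k, W v (pi j') ==> (j' <= j)%N]] with
  | Some j => pi j
  | None => d v
  end.

Lemma gen_color_roundE (R : realType) (V : finType) (k : nat)
    (xv : V -> 'I_k -> R) d rho pi :
  gen_color_round xv d rho pi = round_by (fun v i => xv v i < rho) d pi.
Proof. by []. Qed.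

Section RoundBy.
Variables (V : finType) (k : nat) (W : V -> 'I_k -> bool).

Lemma round_by_last d pi (S : {set 'I_k}) c v :
  W v c -> (forall i, W v i -> i \in S) -> pi \in perm_last S c ->
  round_by W d pi v = c.
Proof.
rewrite inE => Wc WS /forall_inP cmax.
set j := (pi^-1)%g c; have pj : pi j = c by rewrite permKV.
have jmax j' : W v (pi j') -> (j' <= j)%N.
  by move=> /WS /cmax; rewrite permK.
rewrite /round_by; case: pickP => [j0 /andP[W0 /forall_inP j0max] | /(_ j)].
  suff -> : j0 = j by [].
  by apply/val_inj/anti_leq; rewrite jmax //= j0max // pj.
by rewrite pj Wc; move/forall_inP: jmax => ->.
Qed.

Lemma card_mistakes_add_perm_last (ee : {set V}) (c : 'I_k)
    (d : {perm 'I_k} -> V -> 'I_k) (S : {set 'I_k}) :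
  (forall v, v \in ee -> W v c) -> (forall v i, v \in ee -> W v i -> i \in S) ->
  (#|[set pi | [exists v in ee, round_by W (d pi) pi v != c]]|
     + #|perm_last S c| <= k`!)%N.
Proof.
move=> Wc WS; rewrite -card_Sn -(cardsC (perm_last S c)) addnC leq_add2l.
apply: subset_leq_card; apply/fintype.subsetP => pi.
rewrite !inE => /exists_inP[v ve]; apply: contraNN => last_c.
by rewrite (round_by_last _ (Wc v ve) (fun i => WS v i ve)) // inE.
Qed.

End RoundBy.

Lemma one_sub_inv_succ (R : numFieldType) (r : nat) :
  1 - (r.+1%:R)^-1 = r%:R / r.+1%:R :> R.
Proof. by field; rewrite addrC natr1 pnatr_eq0. Qed.

Lemma one_sub_inv_succ_bounds (R : realFieldType) (r : nat) : (3 <= r)%N ->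
  3/4 <= 1 - (r.+1%:R)^-1 :> R /\ 1 - (r.+1%:R)^-1 <= 1 :> R.
Proof.
move=> r_ge3; rewrite one_sub_inv_succ ler_pdivlMr ?ler_pdivrMr ?ltr0n //.
have : 3 <= r%:R :> R by rewrite (ler_nat R 3).
rewrite -natr1; lra.
Qed.

Section LPRounding.
Variables (R : realType) (V E : finType) (k : nat) (edge : E -> {set V})
  (ell : E -> 'I_k) (xv : V -> 'I_k -> R) (xe : E -> R)
  (dflt : {perm 'I_k} -> V -> 'I_k).
Hypothesis xv_sum : forall v, \sum_(i < k) xv v i = k%:R - 1.
Hypothesis xv_bound : forall v i, 0 <= xv v i <= 1.
Hypothesis xe_ge : forall e v, v \in edge e -> xv v (ell e) <= xe e.

Lemma slack_sum v : \sum_i (1 - xv v i) = 1.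
Proof. by rewrite sumrB xv_sum sumr_const card_ord opprB addrC subrK. Qed.

Lemma slack_ge0 v i : 0 <= 1 - xv v i.
Proof. by rewrite subr_ge0; case/andP: (xv_bound v i). Qed.

Lemma lp_pair_ge1 v i j : i != j -> 1 <= xv v i + xv v j.
Proof.
move=> ij; have := slack_sum v; rewrite (bigD1 i) //= (bigD1 j) 1?eq_sym //=.
have : 0 <= \sum_(l | (l != i) && (l != j)) (1 - xv v l).
  by apply: sumr_ge0 => l _; exact: slack_ge0.
lra.
Qed.

Lemma lp_triple_ge2 v i j l : i != j -> i != l -> j != l ->
  2 <= xv v i + xv v j + xv v l.
Proof.
move=> ij il jl; have := slack_sum v.
rewrite (bigD1 i) //= (bigD1 j) 1?eq_sym //= (bigD1 l) /=; last first.
  by rewrite [l == i]eq_sym [l == j]eq_sym il jl.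
have : 0 <= \sum_(m | (m != i) && (m != j) && (m != l)) (1 - xv v m).
  by apply: sumr_ge0 => m _; exact: slack_ge0.
lra.
Qed.

Definition mistake_perms (e : E) (rho : R) : {set {perm 'I_k}} :=
  [set pi | mistake edge ell (gen_color_round xv (dflt pi) rho pi) e].

Lemma no_mistake_mid_threshold e rho pi : xe e < rho -> rho <= 1 - xe e ->
  ~~ mistake edge ell (gen_color_round xv (dflt pi) rho pi) e.
Proof.
move=> xe_rho rho_le; rewrite gen_color_roundE /mistake negb_exists_in.
apply/forall_inP => v ve; apply/negPn/eqP.
have c_wants : xv v (ell e) < rho by apply: le_lt_trans (xe_ge ve) xe_rho.
have last_c : pi \in perm_last [set ell e] (ell e).
  by rewrite inE; apply/forall_inP => t; rewrite inE => /eqP ->.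
apply: (@round_by_last _ _ (fun v i => xv v i < rho) _ _ _ _ _ c_wants _ last_c).
move=> i i_wants; rewrite inE; apply: contraLR i_wants => /(lp_pair_ge1 v).
have := xe_ge ve; rewrite -leNgt; lra.
Qed.

Lemma card_mistake_perms_le e rho : xe e < rho -> rho < 2/3 ->
  ((rank edge).+1 * #|mistake_perms e rho| <= rank edge * k`!)%N.
Proof.
move=> xe_rho rho_lt; set c := ell e.
set others := fun v => [set i | (i != c) && (xv v i < rho)].
set S := c |: \bigcup_(v in edge e) others v.
have c_wants v : v \in edge e -> xv v c < rho.
  by move=> ve; apply: le_lt_trans (xe_ge ve) xe_rho.
have S_wants v i : v \in edge e -> xv v i < rho -> i \in S.
  move=> ve i_wants; rewrite !inE; case: eqP => //= /eqP ic.
  by apply/bigcupP; exists v; rewrite // inE ic.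
have card_others v : v \in edge e -> (#|others v| <= 1)%N.
  move=> ve; apply/card_le1_eqP => i j; rewrite !inE => /andP[ic i_w] /andP[jc j_w].
  apply/eqP; apply: contraT => ji; have := lp_triple_ge2 v ji jc ic.
  have := c_wants v ve; lra.
have card_S : (#|S| <= (rank edge).+1)%N.
  rewrite cardsU1 -add1n leq_add ?leq_b1 //.
  apply: leq_trans (card_bigcup_le _ _) _; apply: leq_trans (leq_bigmax e).
  by rewrite -sum1_card leq_sum.
have cS : c \in S by rewrite setU11.
have mistakes_le : (#|mistake_perms e rho| + #|perm_last S c| <= k`!)%N :=
  card_mistakes_add_perm_last dflt c_wants S_wants.
have fact_le := fact_le_card_mul_perm_last cS.
(* With p := #|perm_last S c|: (r+1) #|M| <= (r+1) (k! - p) and k! <= (r+1) p. *)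
have := leq_mul (leqnn (rank edge).+1) mistakes_le.
have := leq_mul card_S (leqnn #|perm_last S c|).
rewrite mulnDr !mulSn; move: fact_le.
move: #|mistake_perms e rho| #|perm_last S c| #|S| k`! (rank edge); lia.
Qed.

Lemma natr_card_mistake_perms_le e rho : xe e < rho -> rho < 2/3 ->
  #|mistake_perms e rho|%:R <= k`!%:R * (1 - ((rank edge).+1%:R)^-1) :> R.
Proof.
move=> xe_rho rho_lt; rewrite one_sub_inv_succ mulrA ler_pdivlMr ?ltr0n //.
by rewrite mulrC -!natrM ler_nat [(k`! * _)%N]mulnC card_mistake_perms_le.
Qed.

End LPRounding.

Section RealSets.
Local Open Scope classical_set_scope.
Variable R : realType.

Lemma measurable_gt (c : R) : measurable [set rho : R | c < rho].
Proof.
rewrite (_ : [set rho | _] = `]c, +oo[%classic); first exact: measurable_itv.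
by apply/seteqP; split => x /=; rewrite in_itv /= andbT.
Qed.

Lemma measurable_lt_eq (c : R) (b : bool) :
  measurable [set rho : R | (c < rho) = b].
Proof.
case: b; first exact: measurable_gt.
rewrite (_ : [set rho | _] = ~` [set rho | c < rho]).
  exact: measurableC (measurable_gt c).
by apply/seteqP; split => x /= h; [rewrite h | apply/negbTE/negP].
Qed.

Lemma measurable_threshold_pattern (T : finType) (c : T -> R)
    (F : {ffun T -> bool} -> bool) :
  measurable [set rho : R | F [ffun p => c p < rho]].
Proof.
rewrite (_ : [set rho | _] = \big[setU/set0]_(b <- enum {ffun T -> bool} | F b)
   \big[setI/setT]_(p <- enum T) [set rho : R | (c p < rho) = b p]).
  apply: bigsetU_measurable => b _; apply: bigsetI_measurable => p _.
  exact: measurable_lt_eq.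
rewrite -bigcup_seq_cond; apply/seteqP; split => rho /=.
  move=> Fr; exists [ffun p => c p < rho]; first by rewrite /= mem_enum.
  by rewrite -bigcap_seq => p _ /=; rewrite ffunE.
case=> b /= /andP[_ Fb]; rewrite -bigcap_seq => Hb.
suff -> : [ffun p => c p < rho] = b by [].
by apply/ffunP => p; rewrite ffunE; apply: (Hb p); rewrite /= mem_enum.
Qed.

Lemma measurable_open_itv (a b : R) :
  measurable [set rho : R | a < rho < b].
Proof.
rewrite (_ : [set rho | _] = `]a, b[%classic); first exact: measurable_itv.
by apply/seteqP; split => x /=; rewrite in_itv.
Qed.

Lemma lebesgue_measure_le_len (S : set R) (a b : R) : measurable S -> a <= b ->
  S `<=` [set rho | a < rho <= b] -> (lebesgue_measure S <= (b - a)%:E)%E.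
Proof.
move=> mS ab Sab; apply: (@le_trans _ _ (lebesgue_measure `]a, b]%classic)).
  apply: le_measure; rewrite ?inE //.
by rewrite lebesgue_measure_itv /=; case: ifP; rewrite ?lee_fin ?subr_ge0 // -EFinD.
Qed.

End RealSets.

Section MistakeMeasure.
Local Open Scope classical_set_scope.
Variables (R : realType) (V E : finType) (k : nat) (edge : E -> {set V})
  (ell : E -> 'I_k) (xv : V -> 'I_k -> R) (dflt : {perm 'I_k} -> V -> 'I_k).
Local Notation lam := (@lebesgue_measure R).

Definition mistake_set (pi : {perm 'I_k}) (e : E) : set R :=
  [set rho | mistake edge ell (gen_color_round xv (dflt pi) rho pi) e].

Lemma measurable_mistake_set pi e : measurable (mistake_set pi e).
Proof.
pose F (b : {ffun V * 'I_k -> bool}) :=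
  mistake edge ell (round_by (fun v i => b (v, i)) (dflt pi) pi) e.
rewrite (_ : mistake_set pi e = [set rho | F [ffun p => xv p.1 p.2 < rho]]).
  exact: measurable_threshold_pattern.
apply/funext => rho; rewrite /mistake_set /F /= gen_color_roundE.
suff -> : (fun v i => [ffun p => xv p.1 p.2 < rho] (v, i)) =
          (fun v i => xv v i < rho) by [].
by apply/funext => v; apply/funext => i; rewrite ffunE.
Qed.

Lemma indic_mistake_set pi e rho :
  \1_(mistake_set pi e) rho =
  (mistake edge ell (gen_color_round xv (dflt pi) rho pi) e)%:R :> R.
Proof.
rewrite indicE; case: (boolP (mistake _ _ _ _)) => m; first by rewrite mem_set.
by rewrite memNset //; apply/negP.
Qed.

Lemma prob_mistakeE a b e :
  prob_mistake edge ell xv dflt a b e =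
  (((k`!%:R)^-1 * (b - a)^-1)%:E *
    \sum_(pi : {perm 'I_k}) lam ([set rho | (a < rho < b)%R] `&` mistake_set pi e))%E.
Proof.
by rewrite /prob_mistake -ge0_sume_distrr ?EFinM ?muleA.
Qed.

Lemma integral_ecc_cost (D : set R) (w : E -> R) pi :
  measurable D -> (forall e, 0 <= w e) ->
  (\int[lam]_(rho in D) (ecc_cost edge ell w (gen_color_round xv (dflt pi) rho pi))%:E =
   \sum_e (w e)%:E * lam (D `&` mistake_set pi e))%E.
Proof.
move=> mD w_ge0.
transitivity (\int[lam]_(rho in D)
    \sum_e ((w e)%:E * (\1_(mistake_set pi e) rho)%:E))%E.
  apply: eq_integral => rho _; rewrite /ecc_cost -sumEFin.
  by apply: eq_bigr => e _; rewrite indic_mistake_set EFinM.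
have m_indic e : measurable_fun D (fun rho => (\1_(mistake_set pi e) rho : R)%:E).
  by apply/measurable_EFinP/measurable_indic; exact: measurable_mistake_set.
rewrite ge0_integral_sum //.
- apply: eq_bigr => e _; rewrite ge0_integralZl_EFin //.
  + by rewrite integral_indic 1?setIC //; exact: measurable_mistake_set.
  + exact: m_indic.
- by move=> e; apply: emeasurable_funM; [exact: measurable_cst | exact: m_indic].
- by move=> e rho _; apply: mule_ge0; rewrite lee_fin ?indicE.
Qed.

Lemma expected_costE a b (w : E -> R) : a < b -> (forall e, 0 <= w e) ->
  expected_cost edge ell w xv dflt a b =
  (\sum_e (w e)%:E * prob_mistake edge ell xv dflt a b e)%E.
Proof.
move=> ab w_ge0; set I := [set rho | (a < rho < b)%R].
have fact_ge0 : (0 <= ((k`!%:R)^-1 : R)%:E)%E by rewrite lee_fin invr_ge0.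
have len_ge0 : (0 <= ((b - a)^-1 : R)%:E)%E by rewrite lee_fin invr_ge0 subr_ge0 ltW.
have lam_ge0 pi e : (0 <= lam (I `&` mistake_set pi e))%E by exact: measure_ge0.
have term_ge0 pi e : (0 <= (w e)%:E * lam (I `&` mistake_set pi e))%E.
  by apply: mule_ge0; rewrite ?lee_fin.
rewrite /expected_cost.
under eq_bigr => pi _ do rewrite (integral_ecc_cost pi (measurable_open_itv a b) w_ge0).
transitivity (\sum_pi \sum_e ((w e)%:E *
    (((k`!%:R)^-1)%:E * (((b - a)^-1)%:E * lam (I `&` mistake_set pi e)))))%E.
  rewrite ge0_sume_distrr => [|pi _]; last first.
    by apply: mule_ge0 => //; apply: sume_ge0 => e _; exact: term_ge0.
  apply: eq_bigr => pi _; rewrite ge0_sume_distrr => [|e _]; last exact: term_ge0.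
  rewrite ge0_sume_distrr => [|e _]; last by apply: mule_ge0.
  by apply: eq_bigr => e _; rewrite [RHS]muleCA; congr (_ * _)%E; exact: muleCA.
rewrite exchange_big; apply: eq_bigr => e _; rewrite /prob_mistake.
rewrite ge0_sume_distrr => [|pi _]; last by apply: mule_ge0.
rewrite ge0_sume_distrr => [|pi _]; last by apply: mule_ge0 => //; apply: mule_ge0.
by apply: eq_bigr => pi _.
Qed.

Lemma sum_indic_mistake_set e rho :
  \sum_(pi : {perm 'I_k}) \1_(mistake_set pi e) rho =
  #|mistake_perms edge ell xv dflt e rho|%:R :> R.
Proof.
under eq_bigr do rewrite indic_mistake_set.
rewrite -natr_sum -sum1_card; congr (_%:R); rewrite [RHS]big_mkcond /=.
by apply: eq_bigr => pi _; rewrite inE; case: mistake.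
Qed.

End MistakeMeasure.

Section ThresholdIntervals.
Local Open Scope classical_set_scope.
Variable R : realType.
Local Notation lam := (@lebesgue_measure R).

Definition below_thr (x : R) : set R :=
  [set rho | 1/2 < rho < 2/3] `&` [set rho | rho <= x].

Definition above_thr (x : R) : set R :=
  [set rho | 1/2 < rho < 2/3] `&` ([set rho | x < rho] `&` [set rho | 1 - x < rho]).

Lemma measurable_below_thr x : measurable (below_thr x).
Proof.
apply: measurableI; first exact: measurable_open_itv.
rewrite (_ : [set rho | rho <= x] = `]-oo, x]%classic); first exact: measurable_itv.
by apply/seteqP; split => rho /=; rewrite in_itv.
Qed.

Lemma measurable_above_thr x : measurable (above_thr x).
Proof.
apply: measurableI; first exact: measurable_open_itv.
by apply: measurableI; exact: measurable_gt.
Qed.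

Lemma threshold_lengths (x q : R) : 3/4 <= q -> q <= 1 -> 0 <= x ->
  exists a1 a2 : R, [/\ (lam (below_thr x) <= a1%:E)%E,
    (lam (above_thr x) <= a2%:E)%E & 6 * a1 + 6 * q * a2 <= 2 * q * x].
Proof.
move=> q_ge q_le x_ge0.
have [m1 m2] := (measurable_below_thr x, measurable_above_thr x).
rewrite /below_thr /above_thr in m1 m2 *.
have below_le (a b : R) : a <= b -> (forall rho, 1/2 < rho -> rho < 2/3 -> rho <= x ->
    a < rho <= b) -> (lam (below_thr x) <= (b - a)%:E)%E.
  move=> ab sub; apply: lebesgue_measure_le_len m1 ab _.
  by move=> rho [/andP[r1 r2] r3]; exact: sub.
have above_le (a b : R) : a <= b -> (forall rho, 1/2 < rho -> rho < 2/3 -> x < rho ->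
    1 - x < rho -> a < rho <= b) -> (lam (above_thr x) <= (b - a)%:E)%E.
  move=> ab sub; apply: lebesgue_measure_le_len m2 ab _.
  by move=> rho [/andP[r1 r2] [r3 r4]]; exact: sub.
have [x_le|x_gt] := lerP x (1/3).
  exists 0, 0; split; last by nra.
  - by rewrite -(subrr (1/2)); apply: below_le => // rho *; lra.
  - by rewrite -(subrr (2/3)); apply: above_le => // rho *; lra.
have [x_le'|x_gt'] := lerP x (1/2).
  exists 0, (x - 1/3); split; last by nra.
  - by rewrite -(subrr (1/2)); apply: below_le => // rho *; lra.
  - have -> : x - 1/3 = 2/3 - (1 - x) by lra.
    by apply: above_le => [|rho *]; lra.
have [x_le''|x_gt''] := lerP x (2/3).
  exists (x - 1/2), (2/3 - x); split; last by nra.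
  - by apply: below_le => [|rho *]; lra.
  - by apply: above_le => [|rho *]; lra.
exists (2/3 - 1/2), 0; split; last by nra.
- by apply: below_le => [|rho *]; lra.
- by rewrite -(subrr (2/3)); apply: above_le => // rho *; lra.
Qed.

End ThresholdIntervals.

Section EdgeBound.
Local Open Scope classical_set_scope.
Variables (R : realType) (V E : finType) (k : nat) (edge : E -> {set V})
  (ell : E -> 'I_k) (xv : V -> 'I_k -> R) (xe : E -> R)
  (dflt : {perm 'I_k} -> V -> 'I_k).
Hypothesis xv_sum : forall v, \sum_(i < k) xv v i = k%:R - 1.
Hypothesis xv_bound : forall v i, 0 <= xv v i <= 1.
Hypothesis xe_ge : forall e v, v \in edge e -> xv v (ell e) <= xe e.
Local Notation lam := (@lebesgue_measure R).
Local Notation mistake_set := (mistake_set edge ell xv dflt).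

Lemma measure_mistake_set_le e pi :
  (lam ([set rho | (1/2 < rho < 2/3)%R] `&` mistake_set pi e) <=
   lam (below_thr (xe e)) + lam (above_thr (xe e) `&` mistake_set pi e))%E.
Proof.
have mA := measurable_mistake_set edge ell xv dflt pi e.
have mabove := measurableI _ _ (measurable_above_thr (xe e)) mA.
apply: le_trans (measureU2 lam (measurable_below_thr _) mabove).
apply: le_measure; rewrite ?inE.
- exact: measurableI (measurable_open_itv _ _) mA.
- exact: measurableU (measurable_below_thr _) mabove.
move=> rho [I_rho A_rho]; have [le_x|gt_x] := leP rho (xe e); first by left.
have [gt_1x|le_1x] := ltP (1 - xe e) rho; first by right.
by have /negP := no_mistake_mid_threshold dflt xv_sum xv_bound xe_ge pi gt_x le_1x.
Qed.

Lemma sum_measure_above_le e :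
  (\sum_(pi : {perm 'I_k}) lam (above_thr (xe e) `&` mistake_set pi e) <=
   (k`!%:R * (1 - ((rank edge).+1%:R)^-1))%:E * lam (above_thr (xe e)))%E.
Proof.
have mabove := measurable_above_thr (xe e).
have mA pi := measurable_mistake_set edge ell xv dflt pi e.
have m_indic pi : measurable_fun (above_thr (xe e))
    (fun rho => (\1_(mistake_set pi e) rho : R)%:E).
  by apply/measurable_EFinP/measurable_indic; exact: mA.
under eq_bigr => pi _ do rewrite setIC -(integral_indic lam mabove (mA pi)).
rewrite -ge0_integral_sum //
  -integral_cst //; apply: ge0_le_integral => //.
- by move=> rho _; apply: sume_ge0 => pi _; rewrite lee_fin indicE.
- exact: emeasurable_sum.
move=> rho [/andP[_ rho_lt] [xe_rho _]].
rewrite sumEFin lee_fin sum_indic_mistake_set.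
by have := natr_card_mistake_perms_le dflt xv_sum xv_bound xe_ge xe_rho rho_lt.
Qed.

Lemma prob_mistake_le e : (3 <= rank edge)%N -> 0 <= xe e ->
  (prob_mistake edge ell xv dflt (1/2) (2/3) e <=
   (2 * (1 - ((rank edge).+1%:R)^-1) * xe e)%:E)%E.
Proof.
move=> r_ge3 xe_ge0; set q := 1 - _.
have [q_ge q_le] : 3/4 <= q /\ q <= 1 by exact: one_sub_inv_succ_bounds.
have [a1 [a2 [below_le above_le lengths]]] :=
  threshold_lengths q_ge q_le xe_ge0.
have sum_le : (\sum_(pi : {perm 'I_k})
    lam ([set rho | (1/2 < rho < 2/3)%R] `&` mistake_set pi e) <=
    (k`!%:R * (a1 + q * a2))%:E)%E.
  apply: le_trans (lee_sum _ (fun pi _ => measure_mistake_set_le e pi)) _.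
  rewrite big_split /=.
  apply: le_trans (leeD (lee_sum _ (fun pi _ => below_le)) (sum_measure_above_le e)) _.
  rewrite sumEFin sumr_const card_Sn -[a1 *+ _]mulr_natr -/q.
  apply: le_trans (leeD (lexx _) (lee_wpmul2l _ above_le)) _.
    by rewrite lee_fin mulr_ge0 ?ler0n //; lra.
  by rewrite -EFinM -EFinD lee_fin; nra.
rewrite prob_mistakeE; apply: le_trans (lee_wpmul2l _ sum_le) _.
  by rewrite lee_fin mulr_ge0 // invr_ge0 ?ler0n //; lra.
have fact_neq0 : k`!%:R != 0 :> R by rewrite pnatr_eq0 -lt0n fact_gt0.
rewrite -EFinM lee_fin.
have -> : (k`!%:R)^-1 / (2/3 - 1/2) * (k`!%:R * (a1 + q * a2)) = 6 * (a1 + q * a2).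
  by field.
nra.
Qed.

End EdgeBound.

Lemma lp_feasible_coloring (R : realType) (V E : finType) (k : nat)
    (edge : E -> {set V}) (ell : E -> 'I_k) (Y : V -> 'I_k) :
  lp_feasible edge ell (fun v i => (Y v != i)%:R : R)
    (fun e => (mistake edge ell Y e)%:R).
Proof.
split; [|split; [|split]].
- move=> v; rewrite (bigD1 (Y v)) //= eqxx add0r.
  under eq_bigr => i /negbTE iY do rewrite eq_sym iY.
  have k_gt0 : (0 < k)%N := leq_ltn_trans (leq0n _) (ltn_ord (Y v)).
  rewrite sumr_const mulr1n (_ : #|_| = k.-1); last first.
    by rewrite -[k in RHS]card_ord -(cardC1 (Y v)); apply: eq_card => i; rewrite !inE.
  by rewrite -[k in RHS](prednK k_gt0) -natr1 addrK.
- move=> e v ve; case: (boolP (Y v != ell e)) => [Ym | _]; last by case: mistake.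
  suff -> : mistake edge ell Y e by [].
  by apply/exists_inP; exists v.
- by move=> v i; case: (Y v != i); rewrite ?lexx ?ler01.
- by move=> e; case: mistake; rewrite ?lexx ?ler01.
Qed.

Theorem theorem3 (R : realType) (V E : finType) (k : nat)
  (edge : E -> {set V}) (ell : E -> 'I_k) (w : E -> R)
  (xv : V -> 'I_k -> R) (xe : E -> R)
  (dflt : {perm 'I_k} -> V -> 'I_k) :
  (forall e, edge e != finset.set0) ->
  (3 <= rank edge)%N ->
  (forall e, 0 <= w e) ->
  lp_feasible edge ell xv xe ->
  (forall e, xe e = \big[Num.max/0]_(v in edge e) xv v (ell e)) ->
  (forall e, (prob_mistake edge ell xv dflt (1/2) (2/3) e <=
              (2 * (1 - ((rank edge).+1%:R)^-1) * xe e)%:E)%E) /\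
  (lp_optimal edge ell w xv xe ->
   forall Yopt : V -> 'I_k,
   (expected_cost edge ell w xv dflt (1/2) (2/3) <=
    (2 * (1 - ((rank edge).+1%:R)^-1) * ecc_cost edge ell w Yopt)%:E)%E).
Proof.
move=> _ r_ge3 w_ge0 [xv_sum [xe_ge [xv_bound xe_bound]]] _.
have xe_ge0 e : 0 <= xe e by case/andP: (xe_bound e).
have edge_le e := prob_mistake_le dflt xv_sum xv_bound xe_ge r_ge3 (xe_ge0 e).
have [q_ge _] := one_sub_inv_succ_bounds R r_ge3.
split=> // -[_ xe_opt] Yopt.
rewrite expected_costE //; last by lra.
have wE_ge0 e : (0 <= (w e)%:E)%E by rewrite lee_fin.
apply: le_trans (lee_sum _ (fun e _ => lee_wpmul2l (wE_ge0 e) (edge_le e))) _.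
under eq_bigr do rewrite -EFinM.
rewrite sumEFin lee_fin; set q := 1 - _ in q_ge *.
have -> : \sum_e w e * (2 * q * xe e) = 2 * q * lp_obj w xe.
  by rewrite /lp_obj mulr_sumr; apply: eq_bigr => e _; ring.
apply: ler_wpM2l; first by rewrite mulr_ge0 //; lra.
by have := xe_opt _ _ (lp_feasible_coloring R edge ell Yopt).
Qed.
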